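(* Let $g\in\mathcal P$ be continuously differentiable on $(a_g,b_g)$, let $\alpha\in[0,1)$ and assume $g'(x)<\alpha$ for all $x\in(a_g,b_g)$. Then $\mathrm{gr}(g)$ is stable under the shaking $\mathrm{Sh}_\alpha$, i.e. $\mathrm{Sh}_\alpha(\mathrm{gr}(g))=\mathrm{gr}(g)$.
   Context: $\mathcal P$ is the set of continuous $g:\mathbb R\to\mathbb R$ with $g(x)\ge|x|$ for all $x$, $g(x)=|x|$ for $|x|$ large, and $g(x_0)\ne|x_0|$ for some $x_0$. For $g\in\mathcal P$: $a_g=\inf\{x:g(x)\ne|x|\}$, $b_g=\sup\{x:g(x)\ne|x|\}$, $\mathrm{gr}(g)=\{(x,y)\in[a_g,b_g]\times\mathbb R_{\ge0}:|x|\le y\le g(x)\}$. Shaking of sets: let $D$ be the line $y=-x$ and $v_\alpha$ the unit vector positively collinear to $(1,\alpha)$. For compact $K\subseteq\mathbb R^2$, $\mathrm{Sh}_\alpha(K)=\bigcup_{p\in D}K^p$, where $K^p=\emptyset$ if $K\cap(p+\mathbb Rv_\alpha)=\emptyset$ and otherwise $K^p$ is the segment from $p$ to $p+|K\cap(p+\mathbb Rv_\alpha)|\,v_\alpha$, with $|\cdot|$ the one-dimensional Lebesgue measure on the line. *)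

From HB Require Import structures.
From mathcomp Require Import all_boot all_order all_algebra.
From mathcomp Require Import all_classical all_reals all_analysis.
Set Implicit Arguments. Unset Strict Implicit. Unset Printing Implicit Defensive.
Import Order.TTheory GRing.Theory Num.Theory.
Import numFieldNormedType.Exports.
Local Open Scope classical_set_scope.
Local Open Scope ring_scope.

Section Defs.
Variable R : realType.

Definition inP (g : R -> R) : Prop :=
  continuous g /\
  (forall x, `|x| <= g x) /\
  (exists M : R, forall x, M < `|x| -> g x = `|x|) /\
  (exists x0, g x0 != `|x0|).

Definition a_g (g : R -> R) : R := inf [set x | g x != `|x|].
Definition b_g (g : R -> R) : R := sup [set x | g x != `|x|].

Definition gr (g : R -> R) : set (R * R) :=
  [set q | a_g g <= q.1 <= b_g g /\ 0 <= q.2 /\ `|q.1| <= q.2 <= g q.1].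

Definition v_alpha (alpha : R) : R * R :=
  (1 / Num.sqrt (1 + alpha ^+ 2), alpha / Num.sqrt (1 + alpha ^+ 2)).

Definition ptv (p v : R * R) (t : R) : R * R := (p.1 + t * v.1, p.2 + t * v.2).

Definition Dpt (s : R) : R * R := (s, - s).

(* one-dimensional Lebesgue measure of K ∩ (p + R v), v unit, computed
   via the arclength parametrisation t |-> p + t v *)
Definition line_len (K : set (R * R)) (p v : R * R) : R :=
  fine (lebesgue_measure [set t : R | K (ptv p v t)]).

Definition Kp (alpha : R) (K : set (R * R)) (p : R * R) : set (R * R) :=
  [set q | (exists t, K (ptv p (v_alpha alpha) t)) /\
           exists2 t, 0 <= t <= line_len K p (v_alpha alpha) &
             q = ptv p (v_alpha alpha) t].

Definition Sh (alpha : R) (K : set (R * R)) : set (R * R) :=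
  \bigcup_(s in [set: R]) Kp alpha K (Dpt s).

End Defs.

From HB Require Import structures.
From mathcomp Require Import all_boot all_order all_algebra.
From mathcomp Require Import all_classical all_reals all_analysis.
From mathcomp Require Import lra.
Import Order.TTheory GRing.Theory Num.Theory.
Import numFieldNormedType.Exports.
Local Open Scope classical_set_scope.
Local Open Scope ring_scope.

(* Parametrise the shaking line through (s, -s) in the direction (c, alpha c),
   c > 0, as t |-> (s + t c, -s + t alpha c).  Along it y - alpha x is the
   constant -(1 + alpha) s, whereas g x - alpha x is nonincreasing on
   [a_g, b_g] since g' < alpha, and g (a_g) = |a_g| with a_g <= 0.  Hence the
   parameters of the points of gr g on the line are nonnegative (y >= |x|) and
   form a closed, downward closed set, i.e. a segment [0, l] with l its
   Lebesgue measure: the piece K^p placed by the shaking is exactly the part of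
   the line inside gr g.  As these lines cover the plane, Sh_alpha (gr g) is
   gr g. *)

Section real_facts.
Context {R : realType}.

Lemma closed_fun_le (f h : R -> R) : continuous f -> continuous h ->
  closed [set t | f t <= h t].
Proof.
move=> cf ch.
have -> : [set t | f t <= h t] = (h \- f) @^-1` [set x | 0 <= x].
  by apply/seteqP; split => t /=; rewrite subr_ge0.
apply: preimage_closed; last exact: closed_ge.
by move=> t _; exact: (continuousB (ch t) (cf t)).
Qed.

Lemma continuous_affine (s c : R) : continuous (fun t : R => s + t * c).
Proof.
move=> t.
have cs : {for t, continuous (fun=> s)} by exact: cst_continuous.
have cc : {for t, continuous (fun=> c)} by exact: cst_continuous.
exact: (continuousD cs (@continuousM _ _ id _ t cvg_id cc)).
Qed.

Lemma closed_down_closed_eq_itv (T : set R) : closed T -> has_ubound T ->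
  T !=set0 -> (forall t, T t -> 0 <= t) ->
  (forall t u, T t -> 0 <= u <= t -> T u) ->
  T = [set` `[0, sup T]].
Proof.
move=> Tcl Tub Tn0 T_ge0 T_down.
have Tsup : T (sup T) by rewrite [X in X _](closure_id T).1 //; exact: closure_sup.
apply/seteqP; split => t /=; rewrite in_itv /=; last exact: T_down.
by move=> Tt; rewrite T_ge0 //= ub_le_sup.
Qed.

Lemma fine_lebesgue_measure_itv0 (e : R) : 0 <= e ->
  fine (lebesgue_measure [set` `[0, e]]) = e.
Proof.
rewrite lebesgue_measure_itv /= le_eqVlt => /predU1P[<-|e_gt0].
  by rewrite ltxx.
by rewrite lte_fin e_gt0 /= subr0.
Qed.

Lemma derive1_le_sub_mul_nincr (f : R -> R) (k a b : R) : continuous f ->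
  (forall x, a < x < b -> derivable f x 1) ->
  (forall x, a < x < b -> derive1 f x <= k) ->
  forall x z, a <= x -> x <= z -> z <= b -> f z - k * z <= f x - k * x.
Proof.
move=> cf df f'_le x z ax + zb.
rewrite le_eqVlt => /predU1P[-> // | xz].
have in_ab y : y \in `]x, z[ -> a < y < b.
  by rewrite in_itv /= => /andP[xy yz]; rewrite (le_lt_trans ax) ?(lt_le_trans yz).
have [y /in_ab yab mvt] := MVT xz
  (fun y xyz => derivableP (df y (in_ab y xyz)))
  (continuous_subspaceT cf).
have := f'_le y yab; rewrite derive1E; nra.
Qed.

End real_facts.

Section class_P.
Context {R : realType} {g : R -> R}.
Hypothesis gP : inP g.

Lemma inP_norm_bounded : exists M, forall x, g x != `|x| -> `|x| <= M.
Proof.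
case: gP => _ [_ [[M gM] _]]; exists M => x; apply: contraNle => /gM ->.
by rewrite eqxx.
Qed.

Lemma has_lbound_inP : has_lbound [set x | g x != `|x|].
Proof.
have [M gM] := inP_norm_bounded.
by exists (- M) => x /gM; rewrite ler_norml => /andP[].
Qed.

Lemma has_ubound_inP : has_ubound [set x | g x != `|x|].
Proof.
have [M gM] := inP_norm_bounded.
by exists M => x /gM; rewrite ler_norml => /andP[].
Qed.

Lemma eq_norm_closure (A : set R) :
  (forall x, A x -> g x = `|x|) -> forall x, closure A x -> g x = `|x|.
Proof.
case: gP => g_cont [g_ge _] gA x.
have clA : closure A `<=` [set x | g x <= `|x|].
  rewrite [X in _ `<=` X](closure_id _).1; last first.
    exact: closed_fun_le g_cont (@norm_continuous _ R).
  by apply: closureS => y /gA /= ->.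
by move=> /clA /= xA; apply/le_anti; rewrite xA g_ge.
Qed.

Lemma eq_norm_a_g : g (a_g g) = `|a_g g|.
Proof.
apply: (@eq_norm_closure [set x | x < a_g g]); last by rewrite closure_lt /=.
move=> x xa; apply/eqP; apply: contraTT xa => gx; rewrite -leNgt.
exact: ge_inf has_lbound_inP _ gx.
Qed.

Lemma eq_norm_b_g : g (b_g g) = `|b_g g|.
Proof.
apply: (@eq_norm_closure [set x | b_g g < x]); last by rewrite closure_gt /=.
move=> x xb; apply/eqP; apply: contraTT xb => gx; rewrite -leNgt.
exact: ub_le_sup has_ubound_inP _ gx.
Qed.

Lemma a_g_lt_b_g : a_g g < b_g g.
Proof.
have [x0 gx0] := gP.2.2.2.
rewrite (@le_lt_trans _ _ x0) ?(ge_inf has_lbound_inP) //.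
rewrite lt_neqAle (ub_le_sup has_ubound_inP) // andbT.
by apply: contraTneq gx0 => ->; rewrite eq_norm_b_g eqxx.
Qed.

End class_P.

Definition gr_slice {R : realType} (g : R -> R) (alpha c s : R) : set R :=
  [set t | gr g (ptv (Dpt s) (c, alpha * c) t)].

Section shaking_line.
Context {R : realType} {g : R -> R} {alpha c : R}.
Hypothesis gP : inP g.
Hypothesis g_derivable : forall x, a_g g < x < b_g g -> derivable g x 1.
Hypothesis g'_lt : forall x, a_g g < x < b_g g -> derive1 g x < alpha.
Hypothesis alpha_ge0 : 0 <= alpha.
Hypothesis alpha_lt1 : alpha < 1.
Hypothesis c_gt0 : 0 < c.

Local Notation slice := (gr_slice g alpha c).

Lemma inP_sub_mul_nincr {x z : R} : a_g g <= x -> x <= z -> z <= b_g g ->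
  g z - alpha * z <= g x - alpha * x.
Proof.
apply: (derive1_le_sub_mul_nincr _ _ _ _ gP.1 g_derivable).
by move=> y /g'_lt /ltW.
Qed.

Lemma a_g_le0 : a_g g <= 0.
Proof.
rewrite leNgt; apply/negP => a_gt0.
have ab := a_g_lt_b_g gP.
have := inP_sub_mul_nincr (lexx _) (ltW ab) (lexx _).
rewrite (eq_norm_a_g gP) (eq_norm_b_g gP) !gtr0_norm //; last exact: lt_trans ab.
have : 0 < (1 - alpha) * (b_g g - a_g g) by rewrite mulr_gt0 // subr_gt0.
lra.
Qed.

Lemma gr_sliceP s t : slice s t <->
  [/\ a_g g <= s + t * c <= b_g g, 0 <= - s + t * (alpha * c) &
      `|s + t * c| <= - s + t * (alpha * c) <= g (s + t * c)].
Proof.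
rewrite /gr_slice /gr /ptv /Dpt /=.
by split => [[-> [-> ->]] | [-> -> ->]].
Qed.

Lemma gr_slice_ge0 {s t : R} : slice s t -> 0 <= t.
Proof.
case/gr_sliceP => _ _ /andP[+ _]; rewrite ler_norml => /andP[+ _].
have k_gt0 : 0 < c * (1 + alpha) by rewrite mulr_gt0 // ltr_pwDl.
rewrite -(pmulr_lge0 t k_gt0); lra.
Qed.

Lemma gr_slice_down s t u : slice s t -> 0 <= u <= t -> slice s u.
Proof.
move=> st /andP[u_ge0 ut]; have t_ge0 := gr_slice_ge0 st.
have alpha1_gt0 : 0 < 1 + alpha by rewrite ltr_pwDl.
have [uc_ge0 tuc_ge0] : 0 <= u * c /\ 0 <= (t - u) * c.
  by rewrite !mulr_ge0 ?subr_ge0 // ltW.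
have [uac_ge0 uca_ge0 tuca_ge0] :
    [/\ 0 <= u * (alpha * c), 0 <= u * c * (1 - alpha) &
        0 <= (t - u) * c * (1 - alpha)].
  by rewrite !mulr_ge0 ?subr_ge0 // ltW.
case/gr_sliceP: st => /andP[ax xb] y_ge0 /andP[].
rewrite ler_norml => /andP[_ xy] yg.
have s_le0 : s <= 0 by lra.
have a_le_s : a_g g <= s.
  have := inP_sub_mul_nincr (lexx _) ax xb.
  rewrite (eq_norm_a_g gP) ler0_norm ?a_g_le0 // => h.
  by rewrite -(ler_pM2l alpha1_gt0); lra.
have ax_u : a_g g <= s + u * c by lra.
have xu_le_xt : s + u * c <= s + t * c by lra.
have g_xu := inP_sub_mul_nincr ax_u xu_le_xt xb.
apply/gr_sliceP; split; first by apply/andP; split; lra.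
  lra.
by rewrite ler_norml -andbA; apply/and3P; split; lra.
Qed.

Lemma has_ubound_gr_slice s : has_ubound (slice s).
Proof.
exists ((b_g g - s) / c) => t /gr_sliceP[/andP[_ xb] _ _].
by rewrite ler_pdivlMr //; lra.
Qed.

Lemma closed_gr_slice s : closed (slice s).
Proof.
have -> : slice s =
    [set t | a_g g <= s + t * c] `&` [set t | s + t * c <= b_g g] `&`
    [set t | 0 <= - s + t * (alpha * c)] `&`
    [set t | `|s + t * c| <= - s + t * (alpha * c)] `&`
    [set t | - s + t * (alpha * c) <= g (s + t * c)].
  apply/seteqP; split => t /=.
    by case/gr_sliceP => /andP[-> ->] -> /andP[-> ->].
  by move=> [[[[ax xb] y_ge0] xy] yg]; apply/gr_sliceP; rewrite ax xb xy yg.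
have x_cont := continuous_affine s c.
have y_cont := continuous_affine (- s) (alpha * c).
repeat apply: closedI; apply: closed_fun_le => //; try exact: cst_continuous.
  by move=> t; apply: (continuous_comp (x_cont t)); exact: norm_continuous.
by move=> t; apply: (continuous_comp (x_cont t)); exact: gP.1.
Qed.

Lemma gr_slice_itv s : slice s !=set0 ->
  slice s = [set` `[0, sup (slice s)]].
Proof.
move=> sn0; apply: closed_down_closed_eq_itv => //.
- exact: closed_gr_slice.
- exact: has_ubound_gr_slice.
- by move=> t; exact: gr_slice_ge0.
- by move=> t u; exact: gr_slice_down.
Qed.

Lemma gr_slice_segment {s t : R} : slice s t ->
  forall u, slice s u <-> 0 <= u <= fine (lebesgue_measure (slice s)).
Proof.
move=> st u; have slice_itv := @gr_slice_itv s (ex_intro _ t st).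
have sup_ge0 : 0 <= sup (slice s).
  by move: st; rewrite {1}slice_itv /= in_itv => /andP[/le_trans]; apply.
have -> : fine (lebesgue_measure (slice s)) = sup (slice s).
  by rewrite {1}slice_itv fine_lebesgue_measure_itv0.
by rewrite {1}slice_itv /= in_itv.
Qed.

Lemma Kp_gr s : v_alpha alpha = (c, alpha * c) ->
  Kp alpha (gr g) (Dpt s) = ptv (Dpt s) (c, alpha * c) @` slice s.
Proof.
rewrite /Kp /line_len => ->; apply/seteqP; split => q.
  by case=> [[t st] [u /(gr_slice_segment st) su ->]]; exists u.
case=> t st <-; split; first by exists t.
by exists t => //; apply/(gr_slice_segment st).
Qed.

Lemma ptv_Dpt_onto (q : R * R) : exists s t, ptv (Dpt s) (c, alpha * c) t = q.
Proof.
have k_neq0 : c * (1 + alpha) != 0.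
  by rewrite mulf_neq0 ?gt_eqF // ltr_pwDl.
case: q => x y; set t := (x + y) / (c * (1 + alpha)).
have tk : t * (c * (1 + alpha)) = x + y by rewrite divfK.
by exists (x - t * c), t; rewrite /ptv /Dpt /=; congr pair; lra.
Qed.

End shaking_line.

Theorem lemma4p4 (R : realType) (g : R -> R) (alpha : R) :
  inP g ->
  (forall x, a_g g < x < b_g g -> derivable g x 1) ->
  {within [set x | a_g g < x < b_g g], continuous (derive1 g)} ->
  0 <= alpha < 1 ->
  (forall x, a_g g < x < b_g g -> derive1 g x < alpha) ->
  Sh alpha (gr g) = gr g.
Proof.
move=> gP g_derivable _ /andP[alpha_ge0 alpha_lt1] g'_lt.
set c := (Num.sqrt (1 + alpha ^+ 2))^-1.
have c_gt0 : 0 < c by rewrite invr_gt0 sqrtr_gt0 ltr_pwDl ?sqr_ge0.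
have KpE s :
    Kp alpha (gr g) (Dpt s) = ptv (Dpt s) (c, alpha * c) @` gr_slice g alpha c s.
  by apply: Kp_gr => //; rewrite /v_alpha div1r.
apply/seteqP; split => [q [s _]|q gr_q].
  by rewrite KpE => -[t + <-].
have [s [t st_q]] := ptv_Dpt_onto alpha_ge0 c_gt0 q.
by exists s => //; rewrite KpE; exists t; rewrite /gr_slice /= st_q.
Qed.
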